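(* Let $p\ge q$ and $n\ge 1$ be positive integers and let $B$ be a $p\times q$ matrix such that $B^T$ has full row rank. Let $C$ be the $(nq+p)\times(nq+p)$ block matrix $$C=\begin{bmatrix} 0 & B & B & \cdots & B\\ B^T & 0 & I & \cdots & I\\ B^T & I & 0 & \cdots & I\\ \vdots & \vdots & \vdots & \ddots & \vdots\\ B^T & I & I & \cdots & 0\end{bmatrix}$$ (one block of size $p$ followed by $n$ blocks of size $q$), and let $D$ be the $(np+q)\times(np+q)$ block matrix $$D=\begin{bmatrix} 0 & B^T & B^T & \cdots & B^T\\ B & 0 & I & \cdots & I\\ B & I & 0 & \cdots & I\\ \vdots & \vdots & \vdots & \ddots & \vdots\\ B & I & I & \cdots & 0\end{bmatrix}$$ (one block of size $q$ followed by $n$ blocks of size $p$). Then $C$ has $0$ as an eigenvalue with multiplicity at least $p-q$, and $D$ has $n-1$ as an eigenvalue with multiplicity at least $p-q$.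
   Context: $I$ denotes an identity matrix and $0$ a zero matrix of appropriate size. *)

From HB Require Import structures.
From mathcomp Require Import all_boot all_order all_algebra.
Set Implicit Arguments. Unset Strict Implicit. Unset Printing Implicit Defensive.
Import Order.TTheory GRing.Theory Num.Theory.
Local Open Scope ring_scope.

Definition mx_nat (R : nmodType) (m k : nat) (X : 'M[R]_(m, k)) (a b : nat) : R :=
  match @insub nat (fun i => i < m)%N 'I_m a, @insub nat (fun j => j < k)%N 'I_k b with
  | Some a', Some b' => X a' b'
  | _, _ => 0
  end.

(* For X : 'M_(m,k), the (m + n*k) x (m + n*k) block matrix
      [ 0    X  X ... X ]
      [ X^T  0  I ... I ]
      [ X^T  I  0 ... I ]
      [ ...             ]
      [ X^T  I  I ... 0 ]
   with one block of size m followed by n blocks of size k.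
   Row index i >= m lies in block (i-m) %/ k at offset (i-m) %% k. *)
Definition blockmx (R : pzRingType) (m k : nat) (X : 'M[R]_(m, k)) (n : nat)
  : 'M[R]_(m + n * k) :=
  \matrix_(i, j)
    let i := nat_of_ord i in let j := nat_of_ord j in
    if (i < m)%N then
      (if (j < m)%N then 0 else mx_nat X i ((j - m) %% k)%N)
    else if (j < m)%N then mx_nat X j ((i - m) %% k)%N
    else if ((i - m) %/ k == (j - m) %/ k)%N then 0
    else ((i - m) %% k == (j - m) %% k)%N%:R.

From HB Require Import structures.
From mathcomp Require Import all_boot all_order all_algebra.
Import Order.TTheory GRing.Theory Num.Theory.

(* Let K be a basis of the left kernel of B, of rank p - q, and E = [I I ... I]
   the row of n identity blocks.  Both matrices have the shape
   [[0, XE], [(XE)^T, E^T E - I]] with X = B resp. B^T, so K B = 0 and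
   E E^T = n I show that the rows of [K 0] are left eigenvectors of C for 0 and
   the rows of [0 KE] are left eigenvectors of D for n - 1.  A row-free family
   of k left eigenvectors for a makes the matrix similar to one whose first k
   rows are those of a I, so (X - a)^k divides its characteristic polynomial. *)

Set Implicit Arguments.
Unset Strict Implicit.
Unset Printing Implicit Defensive.

Local Open Scope ring_scope.

Lemma sumr_ord_modn (V : nmodType) (F : nat -> V) k n :
  \sum_(l < (n * k)%N) F (l %% k)%N = (\sum_(l < k) F l) *+ n.
Proof.
elim: n => [|n IHn]; first by rewrite mul0n big_ord0 mulr0n.
rewrite mulrS -IHn.
change (\sum_(l < (k + n * k)%N) F (l %% k)%N
        = \sum_(l < k) F l + \sum_(l < (n * k)%N) F (l %% k)%N).
rewrite big_split_ord /=; congr (_ + _); apply: eq_bigr => l _.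
  by rewrite modn_small.
by rewrite modnDl.
Qed.

Lemma mx_natE (R : nmodType) m k (X : 'M[R]_(m, k)) (i : 'I_m) (j : 'I_k) :
  mx_nat X i j = X i j.
Proof.
rewrite /mx_nat (insubT (fun i => i < m)%N (ltn_ord i)).
rewrite (insubT (fun j => j < k)%N (ltn_ord j)).
by congr (X _ _); apply: val_inj.
Qed.

Definition tiled_id (R : pzSemiRingType) k n : 'M[R]_(k, n * k) :=
  \matrix_(t, l) ((t : nat) == l %% k)%N%:R.

Section TiledIdentity.

Variables (R : pzSemiRingType) (k n : nat).
Local Notation E := (tiled_id R k n).

Lemma tiled_idE t l : E t l = ((t : nat) == l %% k)%N%:R.
Proof. exact: mxE. Qed.

Lemma ltn_modn_ord (l : 'I_(n * k)) : (l %% k < k)%N.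
Proof.
have /leq_ltn_trans/(_ (ltn_ord l)) := leq0n l.
by rewrite muln_gt0 => /andP[_ k_gt0]; rewrite ltn_pmod.
Qed.

Lemma mulmx_tiled_idE m (X : 'M[R]_(m, k)) i (l : 'I_(n * k)) :
  (X *m E) i l = mx_nat X i (l %% k)%N.
Proof.
rewrite mxE (bigD1 (Ordinal (ltn_modn_ord l))) //= big1 => [|t /negbTE tl].
  by rewrite tiled_idE eqxx mulr1 addr0 -mx_natE.
by rewrite tiled_idE -[(t : nat) == _]/(t == Ordinal (ltn_modn_ord l)) tl mulr0.
Qed.

Lemma tiled_id_trmulE (l j : 'I_(n * k)) :
  (E^T *m E) l j = (l %% k == j %% k)%N%:R.
Proof.
rewrite mulmx_tiled_idE -[(j %% k)%N]/(nat_of_ord (Ordinal (ltn_modn_ord j))).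
by rewrite mx_natE !mxE eq_sym.
Qed.

Lemma tiled_id_multr : E *m E^T = n%:R%:M.
Proof.
apply/matrixP => t s; rewrite !mxE.
pose F u : R := ((t : nat) == u)%:R * ((s : nat) == u)%:R.
rewrite (eq_bigr (fun l : 'I_(n * k) => F (l %% k)%N)) => [|l _]; last by rewrite !mxE.
rewrite sumr_ord_modn (bigD1 t) //= big1 => [|u /negbTE ut]; last first.
  by rewrite /F -[(t : nat) == u]/(t == u) eq_sym ut mul0r.
rewrite addr0 /F eqxx mul1r -[(s : nat) == t]/(s == t) eq_sym.
by case: (t == s); rewrite ?mul0rn.
Qed.

End TiledIdentity.

Lemma row_free_tiled_id (F : fieldType) k n :
  n%:R != 0 :> F -> row_free (tiled_id F k n).
Proof.
move=> n_neq0; apply/row_freeP; exists (n%:R^-1 *: (tiled_id F k n)^T).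
by rewrite -scalemxAr tiled_id_multr scale_scalar_mx mulVf.
Qed.

Lemma blockmxE (R : pzRingType) m k n (X : 'M[R]_(m, k)) :
  let E := tiled_id R k n in
  blockmx X n = block_mx 0 (X *m E) (X *m E)^T (E^T *m E - 1%:M).
Proof.
move=> E; apply/matrixP => i j; rewrite -[i]splitK -[j]splitK.
have shift_ltn x : (m + x < m)%N = false by rewrite ltnNge leq_addr.
case: (split i) => i'; case: (split j) => j';
  rewrite [LHS]mxE /= ?ltn_ord ?shift_ltn ?addKn.
- by rewrite block_mxEul mxE.
- by rewrite block_mxEur mulmx_tiled_idE.
- by rewrite block_mxEdl mxE mulmx_tiled_idE.
rewrite (block_mxEdr 0 (X *m E)) mxE tiled_id_trmulE !mxE.
have [->|ne] := eqVneq i' j'; first by rewrite !eqxx subrr.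
rewrite mulr0n subr0; case: eqP => // same_block.
suff -> : (i' == j' %[mod k]) = false by [].
apply: contraNF ne => /eqP same_offset; apply/eqP/val_inj.
by rewrite /= (divn_eq i' k) (divn_eq j' k) same_block same_offset.
Qed.

Lemma char_poly_conj (R : comUnitRingType) N (A P : 'M[R]_N) :
  P \in unitmx -> char_poly (P *m A *m invmx P) = char_poly A.
Proof.
move=> P_unit.
have conj_char_poly_mx : char_poly_mx (P *m A *m invmx P) =
    map_mx polyC P *m char_poly_mx A *m map_mx polyC (invmx P).
  rewrite /char_poly_mx !map_mxM mulmxBr mulmxBl; congr (_ - _).
  by rewrite scalar_mxC -mulmxA -map_mxM mulmxV // map_mx1 mulmx1.
rewrite /char_poly conj_char_poly_mx !det_mulmx !det_map_mx mulrC mulrA -rmorphM.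
by rewrite -det_mulmx mulVmx // det1 rmorph1 mul1r.
Qed.

Lemma dvdp_char_poly_pid (R : idomainType) N k (A : 'M[R]_N) a :
  (k <= N)%N -> pid_mx k *m A = a *: (pid_mx k : 'M_(k, N)) ->
  ('X - a%:P) ^+ k %| char_poly A.
Proof.
move=> le_kN pidA.
have top_rows (i j : 'I_N) : (i < k)%N -> A i j = a * (i == j)%:R.
  move=> lt_ik; have := congr1 (fun M : 'M_(k, N) => M (Ordinal lt_ik) j) pidA.
  rewrite !mxE (bigD1 i) //= big1 => [|l /negbTE ne_li]; last first.
    by rewrite mxE /= (inj_eq val_inj) eq_sym ne_li mul0r.
  by rewrite !mxE eqxx lt_ik mul1r addr0 andbT.
pose d := \row_(i < N) (if (i < k)%N then 'X - a%:P else 1).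
pose M := \matrix_(i, j) (if (i < k)%N then (i == j)%:R else char_poly_mx A i j).
have -> : char_poly A = \det (diag_mx d) * \det M.
  rewrite -det_mulmx mul_diag_mx; congr (\det _); apply/matrixP => i j; rewrite !mxE.
  case: ifP => [lt_ik|_]; last by rewrite mul1r.
  by rewrite top_rows //; case: (i == j); rewrite ?mulr1 ?mulr0 ?polyC0 ?subr0.
apply: dvdp_mulr; rewrite det_diag.
rewrite (eq_bigr (fun i : 'I_N => if (i < k)%N then 'X - a%:P else 1)) => [|i _]; last first.
  by rewrite mxE.
rewrite -big_mkcond -(@big_ord_widen _ 1 *%R k N (fun=> 'X - a%:P) le_kN).
by rewrite prodr_const card_ord.
Qed.

Lemma leq_mup_char_poly (F : fieldType) N k (A : 'M[F]_N) (V : 'M[F]_(k, N)) a :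
  row_free V -> V *m A = a *: V -> (k <= mup a (char_poly A))%N.
Proof.
move=> /eqP rankV VA; set L := col_ebase V; set P := row_ebase V.
have P_unit : P \in unitmx := row_ebase_unit V.
have L_unit : L \in unitmx := col_ebase_unit V.
have LpidP : L *m pid_mx k *m P = V by have := mulmx_ebase V; rewrite rankV.
rewrite mup_geq ?monic_neq0 ?char_poly_monic // -(char_poly_conj A P_unit).
apply: dvdp_char_poly_pid; first by rewrite -rankV rank_leq_col.
apply: (can_inj (mulKmx L_unit)); rewrite !mulmxA LpidP VA -scalemxAl -LpidP.
by rewrite mulmxK // scalemxAr.
Qed.

Theorem lemma3p14 (R : realFieldType) (p q n : nat) (B : 'M[R]_(p, q)) :
  (0 < q)%N -> (q <= p)%N -> (1 <= n)%N -> \rank B^T = q ->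
  (p - q <= mup 0 (char_poly (blockmx B n)))%N /\
  (p - q <= mup (n%:R - 1) (char_poly (blockmx B^T n)))%N.
Proof.
move=> _ _ n_gt0 rankBt; set K := row_base (kermx B).
have KB : K *m B = 0 by apply/sub_kermxP; rewrite eq_row_base.
have rankK : \rank (kermx B) = (p - q)%N by rewrite mxrank_ker -mxrank_tr rankBt.
rewrite -rankK; split.
- apply: (leq_mup_char_poly (V := row_mx K 0)).
    by rewrite /row_free rank_row_mx0; apply: row_base_free.
  rewrite blockmxE mul_row_block !mulmx0 !mul0mx !addr0 mulmxA KB mul0mx.
  by rewrite row_mx0 scale0r.
- set E := tiled_id R p n.
  have n_neq0 : n%:R != 0 :> R by rewrite pnatr_eq0 -lt0n.
  apply: (leq_mup_char_poly (V := row_mx 0 (K *m E))).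
    rewrite /row_free rank_row_0mx mxrankMfree ?row_free_tiled_id //.
    exact: row_base_free.
  have KE_Et : K *m E *m E^T = n%:R *: K.
    by rewrite -mulmxA tiled_id_multr mul_mx_scalar.
  rewrite blockmxE mul_row_block !mul0mx !add0r trmx_mul trmxK mulmxA KE_Et.
  rewrite -scalemxAl KB scaler0 mulmxBr mulmxA KE_Et -scalemxAl mulmx1.
  by rewrite scale_row_mx scaler0 scalerBl scale1r.
Qed.
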